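(* Let $\mathcal{C}>2$. For a probability vector $\boldsymbol\pi\in\mathbb{R}^k$, let $\tilde G^m(\boldsymbol\pi)=\sum_{i=1}^k\sqrt{\pi_i(\mathcal{C}-\pi_i)}$. Then $\tilde G^m$ is strongly concave with respect to the $\ell_2$-norm with modulus $\frac{2(\mathcal{C}-2)^2}{\mathcal{C}^3}$. Consequently, for any probability vectors $\boldsymbol\pi_0,\boldsymbol\pi_1\in\mathbb{R}^k$, any $\beta\in[0,1]$, and $\boldsymbol\pi=(1-\beta)\boldsymbol\pi_0+\beta\boldsymbol\pi_1$, \[ \tilde G^m(\boldsymbol\pi)-(1-\beta)\tilde G^m(\boldsymbol\pi_0)-\beta\tilde G^m(\boldsymbol\pi_1)\ \ge\ \frac{(\mathcal{C}-2)^2}{\mathcal{C}^3}\beta(1-\beta)\|\boldsymbol\pi_0-\boldsymbol\pi_1\|_2^2. \]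
   Context: A function $\Phi$ is strongly concave with respect to a norm $\|\cdot\|$ with modulus $\sigma>0$ if, for all $u,v$ in its domain and all $\theta\in[0,1]$, \[ \Phi(\theta u+(1-\theta)v)\ge\theta\Phi(u)+(1-\theta)\Phi(v)+\tfrac{\sigma}{2}\theta(1-\theta)\|u-v\|^2. \] *)

From HB Require Import structures.
From mathcomp Require Import all_boot all_order all_algebra.
From mathcomp Require Import reals.
Set Implicit Arguments. Unset Strict Implicit. Unset Printing Implicit Defensive.
Import Order.TTheory GRing.Theory Num.Theory.
Local Open Scope ring_scope.

Definition prob_vec (R : realType) (k : nat) (p : 'rV[R]_k) : Prop :=
  (forall i, 0 <= p ord0 i) /\ \sum_(i < k) p ord0 i = 1.

Definition l2norm (R : realType) (k : nat) (x : 'rV[R]_k) : R :=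
  Num.sqrt (\sum_(i < k) x ord0 i ^+ 2).

Definition Gm (R : realType) (C : R) (k : nat) (p : 'rV[R]_k) : R :=
  \sum_(i < k) Num.sqrt (p ord0 i * (C - p ord0 i)).

Definition strongly_concave_on (R : realType) (k : nat) (D : 'rV[R]_k -> Prop)
  (Phi : 'rV[R]_k -> R) (norm : 'rV[R]_k -> R) (sigma : R) : Prop :=
  0 < sigma /\
  forall u v theta, D u -> D v -> 0 <= theta <= 1 ->
    Phi (theta *: u + (1 - theta) *: v) >=
      theta * Phi u + (1 - theta) * Phi v
      + sigma / 2 * theta * (1 - theta) * norm (u - v) ^+ 2.

From HB Require Import structures.
From mathcomp Require Import all_boot all_order all_algebra.
From mathcomp Require Import reals ring lra.
Set Implicit Arguments.
Unset Strict Implicit.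
Unset Printing Implicit Defensive.

Import Order.TTheory GRing.Theory Num.Theory.
Local Open Scope ring_scope.

(* Each summand f(x) = sqrt(x (C - x)) satisfies, for m = t a + (1 - t) b,
   f(m)^2 - (t f(a) + (1 - t) f(b))^2 = t (1 - t) ((a - b)^2 + (f(a) - f(b))^2).
   Since both f(m) and t f(a) + (1 - t) f(b) are at most C/2, dividing by their
   sum gives the concavity gap f(m) - t f(a) - (1 - t) f(b) >= t (1 - t) (a - b)^2 / C,
   i.e. strong concavity with modulus 2/C, which dominates 2 (C - 2)^2 / C^3. *)

Section SqrtMulSub.

Variables (R : realType) (C : R).

Lemma sqrt_mul_sub_le_half (x : R) : 0 <= C -> 2 * Num.sqrt (x * (C - x)) <= C.
Proof.
move=> C0; have [x0|xneg] := leP 0 (x * (C - x)); last by rewrite ltr0_sqrtr ?mulr0.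
have s0 := sqrtr_ge0 (x * (C - x)).
have s2 : Num.sqrt (x * (C - x)) ^+ 2 = x * (C - x) by rewrite sqr_sqrtr.
have := sqr_ge0 (C - 2 * x); nra.
Qed.

Lemma sqr_sqrt_mul_sub (x : R) : 0 <= x <= C ->
  Num.sqrt (x * (C - x)) ^+ 2 = x * (C - x).
Proof. by move=> /andP[x0 xC]; rewrite sqr_sqrtr // mulr_ge0 // subr_ge0. Qed.

Lemma sqrt_mul_sub_convex_sqr_gap (a b t : R) :
  0 <= a <= C -> 0 <= b <= C -> 0 <= t <= 1 ->
  let m := t * a + (1 - t) * b in
  let sa := Num.sqrt (a * (C - a)) in let sb := Num.sqrt (b * (C - b)) in
  Num.sqrt (m * (C - m)) ^+ 2 - (t * sa + (1 - t) * sb) ^+ 2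
    = t * (1 - t) * ((a - b) ^+ 2 + (sa - sb) ^+ 2).
Proof.
move=> aC bC /andP[t0 t1] m sa sb.
have mC : 0 <= m <= C.
  by move: aC bC => /andP[? ?] /andP[? ?]; rewrite /m; apply/andP; split; nra.
rewrite sqr_sqrt_mul_sub //.
have ea : sa ^+ 2 = a * (C - a) by exact: sqr_sqrt_mul_sub.
have eb : sb ^+ 2 = b * (C - b) by exact: sqr_sqrt_mul_sub.
have -> : (t * sa + (1 - t) * sb) ^+ 2
    = t ^+ 2 * sa ^+ 2 + (1 - t) ^+ 2 * sb ^+ 2 + 2 * t * (1 - t) * sa * sb by ring.
have -> : t * (1 - t) * ((a - b) ^+ 2 + (sa - sb) ^+ 2)
    = t * (1 - t) * ((a - b) ^+ 2 + sa ^+ 2 + sb ^+ 2 - 2 * sa * sb) by ring.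
by rewrite ea eb /m; ring.
Qed.

Lemma sqrt_mul_sub_concave_gap (a b t : R) :
  0 <= a <= C -> 0 <= b <= C -> 0 <= t <= 1 ->
  t * (1 - t) * (a - b) ^+ 2 <=
    C * (Num.sqrt ((t * a + (1 - t) * b) * (C - (t * a + (1 - t) * b)))
         - (t * Num.sqrt (a * (C - a)) + (1 - t) * Num.sqrt (b * (C - b)))).
Proof.
move=> aC bC tt; have := sqrt_mul_sub_convex_sqr_gap aC bC tt => /=.
set Y := Num.sqrt _; set sa := Num.sqrt (a * _); set sb := Num.sqrt (b * _) => gap.
have C0 : 0 <= C by case/andP: aC; exact: le_trans.
have [t0 t1] := andP tt.
have saC : 2 * sa <= C := sqrt_mul_sub_le_half a C0.
have sbC : 2 * sb <= C := sqrt_mul_sub_le_half b C0.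
have YC : 2 * Y <= C by exact: sqrt_mul_sub_le_half.
have Y0 : 0 <= Y := sqrtr_ge0 _.
have sa0 : 0 <= sa := sqrtr_ge0 _; have sb0 : 0 <= sb := sqrtr_ge0 _.
set yc := t * sa + (1 - t) * sb in gap *.
have yc0 : 0 <= yc by rewrite /yc; nra.
have ycC : 2 * yc <= C by rewrite /yc; nra.
have tt0 : 0 <= t * (1 - t) by nra.
have T_le : t * (1 - t) * (a - b) ^+ 2 <= Y ^+ 2 - yc ^+ 2.
  by rewrite gap ler_wpM2l // lerDl sqr_ge0.
have Yyc : yc <= Y.
  rewrite -ler_sqr ?nnegrE // -subr_ge0.
  exact: le_trans (mulr_ge0 tt0 (sqr_ge0 _)) T_le.
(* Y^2 - yc^2 = (Y + yc)(Y - yc) and Y + yc <= C *)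
nra.
Qed.

End SqrtMulSub.

Lemma prob_vec_coord_le1 (R : realType) (k : nat) (p : 'rV[R]_k) i :
  prob_vec p -> 0 <= p ord0 i <= 1.
Proof.
move=> [p0 p1]; rewrite p0 /= -p1 (bigD1 i) //= lerDl.
by apply: sumr_ge0 => j _.
Qed.

Lemma l2norm_sqr (R : realType) (k : nat) (x : 'rV[R]_k) :
  l2norm x ^+ 2 = \sum_(i < k) x ord0 i ^+ 2.
Proof. by rewrite sqr_sqrtr // sumr_ge0 // => i _; exact: sqr_ge0. Qed.

Lemma Gm_concave_gap (R : realType) (C : R) (k : nat) (u v : 'rV[R]_k) (t : R) :
  0 < C -> (forall i, 0 <= u ord0 i <= C) -> (forall i, 0 <= v ord0 i <= C) ->
  0 <= t <= 1 ->
  t * Gm C u + (1 - t) * Gm C v + C^-1 * t * (1 - t) * l2norm (u - v) ^+ 2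
    <= Gm C (t *: u + (1 - t) *: v).
Proof.
move=> C0 uC vC tt; rewrite l2norm_sqr /Gm !mulr_sumr -!big_split /=.
apply: ler_sum => i _; rewrite !mxE.
have := sqrt_mul_sub_concave_gap (uC i) (vC i) tt.
rewrite -(ler_pdivrMl _ _ C0) !mulrA; lra.
Qed.

Lemma sqr_sub2_div_cube_le_inv (R : realType) (C : R) :
  1 <= C -> (C - 2) ^+ 2 / C ^+ 3 <= C^-1.
Proof.
move=> C1; have C0 : 0 < C by lra.
rewrite ler_pdivrMr ?exprn_gt0 // exprSr mulrA mulVf ?gt_eqF // mul1r; nra.
Qed.

Lemma Gm_prob_vec_concave_gap (R : realType) (C : R) (k : nat) (u v : 'rV[R]_k) t :
  2 < C -> prob_vec u -> prob_vec v -> 0 <= t <= 1 ->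
  t * Gm C u + (1 - t) * Gm C v
    + (C - 2) ^+ 2 / C ^+ 3 * t * (1 - t) * l2norm (u - v) ^+ 2
  <= Gm C (t *: u + (1 - t) *: v).
Proof.
move=> C2 pu pv /[dup] tt /andP[t0 t1]; have C0 : 0 < C by lra.
have coordC (p : 'rV[R]_k) i : prob_vec p -> 0 <= p ord0 i <= C.
  by move=> /(prob_vec_coord_le1 i) /andP[p0 p1]; rewrite p0 /=; lra.
apply: le_trans (Gm_concave_gap C0 (coordC u ^~ pu) (coordC v ^~ pv) tt).
have w0 : 0 <= t * (1 - t) * l2norm (u - v) ^+ 2.
  by apply: mulr_ge0; [nra | exact: sqr_ge0].
have cle : (C - 2) ^+ 2 / C ^+ 3 <= C^-1 by apply: sqr_sub2_div_cube_le_inv; lra.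
by rewrite lerD2l; move: (ler_wpM2r w0 cle); rewrite !mulrA.
Qed.

Theorem lemma12 (R : realType) (C : R) (k : nat) :
  2 < C ->
  strongly_concave_on (@prob_vec R k) (@Gm R C k) (@l2norm R k)
    (2 * (C - 2) ^+ 2 / C ^+ 3)
  /\
  (forall (p0 p1 : 'rV[R]_k) (beta : R),
     prob_vec p0 -> prob_vec p1 -> 0 <= beta <= 1 ->
     Gm C ((1 - beta) *: p0 + beta *: p1) - (1 - beta) * Gm C p0 - beta * Gm C p1
       >= (C - 2) ^+ 2 / C ^+ 3 * beta * (1 - beta) * l2norm (p0 - p1) ^+ 2).
Proof.
move=> C2; split; first split.
- by rewrite !mulr_gt0 ?invr_gt0 ?exprn_gt0 ?subr_gt0 //; lra.
- move=> u v t pu pv tt.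
  have -> : 2 * (C - 2) ^+ 2 / C ^+ 3 / 2 = (C - 2) ^+ 2 / C ^+ 3.
    by field; rewrite gt_eqF //; lra.
  exact: Gm_prob_vec_concave_gap.
- move=> p0 p1 b pp0 pp1 /andP[b0 b1].
  have b'01 : 0 <= 1 - b <= 1 by apply/andP; split; lra.
  have := Gm_prob_vec_concave_gap C2 pp0 pp1 b'01.
  have -> : 1 - (1 - b) = b by ring.
  by rewrite [_ * (1 - b) * b]mulrAC; lra.
Qed.
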